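(* Let $\vec H$ be a fixed oriented graph whose underlying graph $H$ is bipartite, and suppose $\vec H$ is well-oriented with respect to the bipartition $V(H)=A(H)\sqcup B(H)$, i.e. every arc of $\vec H$ goes from $A(H)$ to $B(H)$. Let \[\Delta'(H)=\min\Big\{\max_{v\in A(H)}\deg_H(v),\ \max_{v\in B(H)}\deg_H(v)\Big\}.\] Then $\mathrm{ex}(n,\vec H)=O(n^{2-1/\Delta'(H)})$.
   Context: An oriented graph is a digraph in which each pair of vertices is joined by at most one arc. $\mathrm{ex}(n,\vec H)$ is the maximum number of arcs in an $n$-vertex oriented graph that does not contain $\vec H$ as a subgraph (respecting orientations). *)

From mathcomp Require Import all_boot.
From Stdlib Require Import Reals.
Set Implicit Arguments. Unset Strict Implicit. Unset Printing Implicit Defensive.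

Definition oriented (T : finType) (G : rel T) : bool :=
  [forall x, ~~ G x x] && [forall x, forall y, ~~ (G x y && G y x)].

Definition narcs (T : finType) (G : rel T) : nat :=
  #|[set p : T * T | G p.1 p.2]|.

Definition contains (V T : finType) (G : rel T) (H : rel V) : bool :=
  [exists f : {ffun V -> T}, injectiveb f &&
     [forall u, forall v, H u v ==> G (f u) (f v)]].

Definition ex (V : finType) (H : rel V) (n : nat) : nat :=
  \max_(g : {ffun 'I_n * 'I_n -> bool} |
          oriented (fun x y => g (x, y)) && ~~ contains (fun x y => g (x, y)) H)
     narcs (fun x y => g (x, y)).

Definition udeg (V : finType) (H : rel V) (v : V) : nat :=
  #|[set w | H v w || H w v]|.

Definition Delta' (V : finType) (H : rel V) (A : {set V}) : nat :=
  minn (\max_(v in A) udeg H v) (\max_(v in ~: A) udeg H v).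

(* Dependent random choice, done by double counting.  Say every vertex of
   B(H) has in-degree at most r (otherwise reverse all arcs), let h = 2|V(H)|
   and call an r-tuple sparse if its common out-neighbourhood has fewer than h
   vertices.  Summed over all r-tuples t, the common in-neighbourhoods N(t)
   have total size sum_x d+(x)^r, whereas the sparse r-tuples inside N(t)
   number at most n^r h^r in total.  So if sum_x d+(x)^r > (h + h^r) n^r, some
   N(t) is larger than h plus its number of sparse tuples; deleting one entry
   of each of them leaves a set U of more than h vertices without sparse
   tuples.  Embed A(H) into U and then, greedily, each vertex of B(H) into the
   common out-neighbourhood of the images of its in-neighbours.  By the power
   mean inequality, more than C n^(2 - 1/r) arcs force
   sum_x d+(x)^r > (h + h^r) n^r. *)

From mathcomp Require Import all_boot.
From Stdlib Require Import Reals Lra.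
(* Reals rebinds [^] in nat_scope to Nat.pow; re-importing ssrnat (and not all_boot,
   which would take the %R key back from R_scope) restores expn. *)
From mathcomp Require Import ssrnat zify.
Set Implicit Arguments. Unset Strict Implicit. Unset Printing Implicit Defensive.

Lemma leq_exp2rW m n e : m <= n -> m ^ e <= n ^ e.
Proof. by move=> mn; elim: e => // e IH; rewrite !expnS leq_mul. Qed.

Lemma leq_rearrangement_expn a b k : a * b ^ k + b * a ^ k <= a ^ k.+1 + b ^ k.+1.
Proof.
wlog ab : a b / a <= b => [wlog_ab | ].
  by case: (leqP a b) => [|/ltnW] /wlog_ab //; rewrite addnC [_ + b ^ _]addnC.
have := leq_exp2rW k ab; rewrite !expnS; move: (a ^ k) (b ^ k) => X Y; nia.
Qed.

Lemma leq_chebyshev_sum (I : finType) (d : I -> nat) k :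
  (\sum_i d i) * (\sum_i d i ^ k) <= #|I| * \sum_i d i ^ k.+1.
Proof.
have prodE : (\sum_i d i) * (\sum_j d j ^ k) = \sum_i \sum_j d i * d j ^ k.
  by rewrite big_distrl; apply: eq_bigr => i _; rewrite big_distrr.
rewrite -(leq_pmul2l (isT : 0 < 2)) mul2n -addnn prodE [X in _ + X]exchange_big -big_split /=.
under eq_bigr do rewrite -big_split /=.
apply: (@leq_trans (\sum_i \sum_j (d i ^ k.+1 + d j ^ k.+1))).
  by apply: leq_sum => i _; apply: leq_sum => j _; apply: leq_rearrangement_expn.
under eq_bigr do rewrite big_split /= sum_nat_const.
by rewrite big_split /= sum_nat_const -big_distrr /= mul2n -addnn.
Qed.

Lemma leq_power_mean_sum (I : finType) (d : I -> nat) k :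
  (\sum_i d i) ^ k.+1 <= #|I| ^ k * \sum_i d i ^ k.+1.
Proof.
elim: k => [|k IH].
  by rewrite expn1 mul1n; apply: eq_leq; apply: eq_bigr => i _; rewrite expn1.
rewrite expnS (leq_trans (leq_mul (leqnn _) IH)) // mulnCA.
by rewrite [#|I| ^ k.+1]expnS [#|I| * _]mulnC -mulnA leq_mul2l leq_chebyshev_sum orbT.
Qed.

Lemma INR_muln m n : INR (m * n) = (INR m * INR n)%R.
Proof. by rewrite -mult_INR. Qed.

Lemma INR_expn m e : INR (m ^ e) = (INR m ^ e)%R.
Proof. by elim: e => // e IH; rewrite expnS INR_muln IH. Qed.

Lemma Rpower_two_sub_inv_pow n r : 0 < n -> 0 < r ->
  (Rpower (INR n) (2 - / INR r) ^ r)%R = INR (n ^ r.-1 * n ^ r).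
Proof.
move=> n_gt0 r_gt0; have INRn_gt0 : (0 < INR n)%R by apply/lt_0_INR/ltP.
rewrite -expnD -Rpower_pow; last exact: exp_pos.
rewrite Rpower_mult INR_expn -Rpower_pow //.
congr Rpower; rewrite plus_INR -(prednK r_gt0) S_INR /=; field.
by have := pos_INR r.-1; lra.
Qed.

Lemma expn_lt_of_Rpower_lt K n e r : 0 < n -> 0 < r ->
  (INR K * Rpower (INR n) (2 - / INR r) < INR e)%R -> K * (n ^ r.-1 * n ^ r) < e ^ r.
Proof.
move=> n_gt0 r_gt0; set P := Rpower _ _ => lt_e.
have P_gt0 : (0 < P)%R by apply: exp_pos.
have e_gt0 : (0 < INR e)%R by have := pos_INR K; nra.
have [-> | K_gt0] := posnP K.
  by rewrite mul0n expn_gt0; apply/orP; left; apply/ltP/INR_lt.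
apply/ltP/INR_lt; rewrite INR_muln -Rpower_two_sub_inv_pow // INR_expn.
apply: (Rle_lt_trans _ ((INR K * P) ^ r)).
  rewrite Rpow_mult_distr -INR_expn; apply/Rmult_le_compat_r/le_INR/leP.
    exact/pow_le/Rlt_le.
  by rewrite -{1}(expn1 K) leq_pexp2l.
have KP_gt0 : (0 < INR K * P)%R by apply/Rmult_lt_0_compat/P_gt0/lt_0_INR/ltP.
rewrite -!Rpower_pow //; apply: Rlt_Rpower_l; first exact/lt_0_INR/ltP.
by split.
Qed.

Definition outdeg (T : finType) (G : rel T) (x : T) : nat := #|[set y | G x y]|.

Definition indeg (T : finType) (G : rel T) (y : T) : nat := #|[set x | G x y]|.

Lemma narcs_outdeg (T : finType) (G : rel T) : narcs G = \sum_x outdeg G x.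
Proof.
rewrite /narcs /outdeg -sum1dep_card.
under [RHS]eq_bigr do rewrite -sum1dep_card.
by rewrite pair_big_dep.
Qed.

Lemma narcs_transpose (T : finType) (G : rel T) : narcs (fun x y => G y x) = narcs G.
Proof.
rewrite /narcs -(card_preimset _ (can_inj swap_pairK)); apply: eq_card => -[x y].
by rewrite !inE.
Qed.

Lemma contains_transpose (V T : finType) (H : rel V) (G : rel T) :
  contains (fun x y => G y x) (fun u v => H v u) -> contains G H.
Proof.
case/existsP => f /andP [f_inj /forallP f_hom]; apply/existsP; exists f; rewrite f_inj /=.
by apply/forallP => u; apply/forallP => v; have /forallP /(_ u) := f_hom v.
Qed.

Lemma leq_outdeg_udeg (V : finType) (H : rel V) v : outdeg H v <= udeg H v.
Proof. by apply/subset_leq_card/subsetP => w; rewrite !inE => ->. Qed.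

Lemma leq_indeg_udeg (V : finType) (H : rel V) v : indeg H v <= udeg H v.
Proof. by apply/subset_leq_card/subsetP => w; rewrite !inE => ->; rewrite orbT. Qed.

Section CommonNeighbourhoods.

Variables (T : finType) (G : rel T) (r : nat).

Definition common_in (t : {ffun 'I_r -> T}) : {set T} :=
  [set x | [forall i, G x (t i)]].

Definition common_out (s : {ffun 'I_r -> T}) : {set T} :=
  [set y | [forall i, G (s i) y]].

Definition sparse_tuples (h : nat) (U : {set T}) : {set {ffun 'I_r -> T}} :=
  [set s | (s \in ffun_on U) && (#|common_out s| < h)].

Lemma card_ffun_on_pred (P : pred T) :
  #|[set t : {ffun 'I_r -> T} | [forall i, P (t i)]]| = #|[set x | P x]| ^ r.
Proof.
rewrite -[r in RHS]card_ord -card_ffun_on; apply: eq_card => t.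
by rewrite inE; apply/forallP/ffun_onP => Pt i; move: (Pt i); rewrite inE.
Qed.

Lemma sum_card_common_in :
  \sum_(t : {ffun 'I_r -> T}) #|common_in t| = \sum_x outdeg G x ^ r.
Proof.
rewrite (eq_bigr (fun t : {ffun 'I_r -> T} => \sum_(x | [forall i, G x (t i)]) 1)); last first.
  by move=> t _; rewrite sum1dep_card.
rewrite (exchange_big_dep xpredT) //=; apply: eq_bigr => x _.
by rewrite sum1dep_card -card_ffun_on_pred.
Qed.

Lemma ffun_on_common_in (s t : {ffun 'I_r -> T}) :
  (s \in ffun_on (common_in t)) = (t \in ffun_on (common_out s)).
Proof.
apply/ffun_onP/ffun_onP => st i; rewrite inE; apply/forallP => j;
  by move: (st j); rewrite inE => /forallP.
Qed.

Lemma card_tuples_sparse_in_common_in h (s : {ffun 'I_r -> T}) :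
  #|[set t | s \in sparse_tuples h (common_in t)]| <= h ^ r.
Proof.
case: (ltnP #|common_out s| h) => [sparse_s | dense_s]; last first.
  suff -> : [set t | s \in sparse_tuples h (common_in t)] = set0 by rewrite cards0.
  by apply/setP => t; rewrite !inE ltnNge dense_s andbF.
apply: leq_trans (_ : #|ffun_on (common_out s)| <= _).
  apply/subset_leq_card/subsetP => t.
  by rewrite !in_set -ffun_on_common_in => /andP [].
by rewrite card_ffun_on card_ord leq_exp2rW // ltnW.
Qed.

Lemma sum_card_sparse_tuples_common_in h :
  \sum_(t : {ffun 'I_r -> T}) #|sparse_tuples h (common_in t)| <= #|T| ^ r * h ^ r.
Proof.
rewrite (eq_bigr (fun t => \sum_(s in sparse_tuples h (common_in t)) 1)); last first.
  by move=> t _; rewrite sum1_card.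
rewrite (exchange_big_dep xpredT) //= -[r in #|T| ^ r]card_ord -card_ffun -sum_nat_const.
by apply: leq_sum => s _; rewrite sum1dep_card card_tuples_sparse_in_common_in.
Qed.

Lemma exists_large_common_in h :
  (h + h ^ r) * #|T| ^ r < \sum_x outdeg G x ^ r ->
  exists t, h + #|sparse_tuples h (common_in t)| < #|common_in t|.
Proof.
rewrite -sum_card_common_in => large; apply/existsP; move: large; apply: contraLR.
rewrite negb_exists -leqNgt => /forallP small.
apply: (@leq_trans (\sum_(t : {ffun 'I_r -> T}) (h + #|sparse_tuples h (common_in t)|))).
  by apply: leq_sum => t _; rewrite leqNgt small.
rewrite big_split /= sum_nat_const card_ffun card_ord mulnDl [h * _]mulnC leq_add2l.
by rewrite [h ^ r * _]mulnC sum_card_sparse_tuples_common_in.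
Qed.

Lemma sparse_tuples_removal h (U : {set T}) : 0 < r ->
  exists U' : {set T},
    [/\ U' \subset U, #|U| <= #|U'| + #|sparse_tuples h U| & sparse_tuples h U' = set0].
Proof.
move=> r_gt0; pose X := [set s (Ordinal r_gt0) | s : {ffun 'I_r -> T} in sparse_tuples h U].
exists (U :\: X); split; first exact: subsetDl.
  rewrite -(cardsID X U) addnC leq_add2l.
  exact: leq_trans (subset_leq_card (subsetIr _ _)) (leq_imset_card _ _).
apply/setP => s; rewrite !in_set; apply/negP => /andP [/ffun_onP sU' sparse_s].
have /setDP [_] := sU' (Ordinal r_gt0); apply/negP/negPn/imsetP; exists s => //.
rewrite in_set sparse_s andbT; apply/ffun_onP => i.
by have /setDP [] := sU' i.
Qed.

Lemma dense_common_out_set h (U S : {set T}) (x0 : T) :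
  sparse_tuples h U = set0 -> x0 \in U -> S \subset U -> #|S| <= r ->
  h <= #|[set y | [forall x in S, G x y]]|.
Proof.
(* Padding with x0 makes this work for #|S| < r, even for S = set0. *)
move=> dense_U x0U SU small_S; pose s := [ffun i : 'I_r => nth x0 (enum S) i].
have sU : s \in ffun_on U.
  apply/ffun_onP => i; rewrite ffunE.
  have [iS | /(nth_default x0) ->] := ltnP i (size (enum S)); last exact: x0U.
  by apply/(subsetP SU); rewrite -mem_enum mem_nth.
have : s \notin sparse_tuples h U by rewrite dense_U inE.
rewrite in_set sU -leqNgt => /leq_trans; apply; apply/subset_leq_card/subsetP => y.
rewrite !in_set => /forallP sy; apply/forall_inP => x xS.
have ix : index x (enum S) < r by rewrite (leq_trans _ small_S) // cardE index_mem mem_enum.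
by move: (sy (Ordinal ix)); rewrite ffunE nth_index ?mem_enum.
Qed.

End CommonNeighbourhoods.

Lemma greedy_injective_choice (V T : finType) (t0 : T) (C : V -> {set T})
    (F : {set T}) (D : {set V}) :
  (forall v, v \in D -> #|D| + #|F| <= #|C v|) ->
  exists2 g : V -> T, {in D &, injective g} & forall v, v \in D -> g v \in C v :\: F.
Proof.
move Dn: #|D| => n; elim: n D Dn => [|n IH] D Dn large_C.
  by exists (fun=> t0) => [u v|v]; rewrite (cards0_eq Dn) inE.
have /card_gt0P [d dD] : 0 < #|D| by rewrite Dn.
have Dd : #|D :\ d| = n by move: Dn; rewrite (cardsD1 d) dD; lia.
have [g g_inj g_C] : exists2 g : V -> T,
    {in D :\ d &, injective g} & forall v, v \in D :\ d -> g v \in C v :\: F.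
  by apply: IH Dd _ => v /setD1P [_ vD]; have := large_C v vD; lia.
have [y] : exists y, y \in (C d :\: F) :\: g @: (D :\ d).
  apply/set0Pn; rewrite -card_gt0.
  have := cardsID (g @: (D :\ d)) (C d :\: F); have := cardsID F (C d).
  have := leq_imset_card g (D :\ d); have := subset_leq_card (subsetIr (C d) F).
  have := subset_leq_card (subsetIr (C d :\: F) (g @: (D :\ d))).
  have := large_C d dD; lia.
case/setDP => yCF yg; exists (fun v => if v == d then y else g v).
  have g_new v : v \in D -> v != d -> y != g v.
    by move=> vD vd; apply: contraNneq yg => ->; apply: imset_f; apply/setD1P.
  move=> u v uD vD /=; case: eqVneq => [->|ud]; case: eqVneq => [->|vd] //.
  - by move/eqP; rewrite (negbTE (g_new v vD vd)).
  - by move/esym/eqP; rewrite (negbTE (g_new u uD ud)).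
  - by apply: g_inj; apply/setD1P.
by move=> v vD; case: eqVneq => [->|vd] //; apply: g_C; apply/setD1P.
Qed.

Section Embedding.

Variables (V T : finType) (H : rel V) (A : {set V}) (G : rel T) (r : nat).
Hypothesis H_AB : forall u v, H u v -> (u \in A) /\ (v \notin A).
Hypothesis indeg_B : forall v, v \notin A -> indeg H v <= r.

Lemma contains_of_dense_set (U : {set T}) :
  #|V| < #|U| -> sparse_tuples G r (2 * #|V|) U = set0 -> contains G H.
Proof.
move=> large_U dense_U; have /card_gt0P [x0 x0U] : 0 < #|U| by lia.
have [f f_inj fU] : exists2 f : V -> T,
    {in A &, injective f} & forall u, u \in A -> f u \in U :\: set0.
  apply: (greedy_injective_choice x0) => u _.
  by rewrite cards0 addn0 (leq_trans (max_card A) (ltnW large_U)).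
pose Cb v := [set y | [forall x in f @: [set u | H u v], G x y]].
have large_Cb v : v \in ~: A -> #|~: A| + #|f @: A| <= #|Cb v|.
  rewrite inE => vB.
  apply: leq_trans (leq_add (max_card _) (leq_trans (leq_imset_card f A) (max_card _))) _.
  rewrite addnn -mul2n; apply: (dense_common_out_set dense_U x0U).
    apply/subsetP => x /imsetP [u]; rewrite inE => Huv ->.
    by have /setDP [] := fU u (H_AB Huv).1.
  exact: leq_trans (leq_imset_card _ _) (indeg_B vB).
have [g g_inj gCb] := greedy_injective_choice x0 large_Cb.
have {}gCb v : v \notin A -> g v \in Cb v :\: f @: A.
  by move=> vB; apply: gCb; rewrite inE.
have g_new v : v \notin A -> g v \notin f @: A by case/gCb/setDP.
apply/existsP; exists [ffun v => if v \in A then f v else g v]; apply/andP; split.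
  apply/injectiveP => u v; rewrite !ffunE.
  case: (boolP (u \in A)) => uA; case: (boolP (v \in A)) => vA.
  - exact: f_inj.
  - by move=> fg; case/negP: (g_new v vA); rewrite -fg imset_f.
  - by move=> gf; case/negP: (g_new u uA); rewrite gf imset_f.
  - by apply: g_inj; rewrite inE.
apply/forallP => u; apply/forallP => v; apply/implyP => Huv.
have [uA vB] := H_AB Huv; rewrite !ffunE uA (negbTE vB).
have /setDP [+ _] := gCb v vB; rewrite inE => /forall_inP; apply.
by rewrite imset_f // inE.
Qed.

Lemma contains_of_large_outdeg_sum : 0 < r ->
  (2 * #|V| + (2 * #|V|) ^ r) * #|T| ^ r < \sum_x outdeg G x ^ r -> contains G H.
Proof.
move=> r_gt0 /exists_large_common_in [t large_t].
have [U [_ U_large dense_U]] := sparse_tuples_removal G (2 * #|V|) (common_in G t) r_gt0.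
apply: contains_of_dense_set dense_U; lia.
Qed.

End Embedding.

Lemma contains_of_many_arcs (V T : finType) (H : rel V) (A : {set V}) (G : rel T) r :
  0 < r -> 0 < #|T| ->
  (forall u v, H u v -> (u \in A) /\ (v \notin A)) ->
  (forall v, v \notin A -> indeg H v <= r) ->
  (INR (2 * #|V| + (2 * #|V|) ^ r) * Rpower (INR #|T|) (2 - / INR r) < INR (narcs G))%R ->
  contains G H.
Proof.
move=> r_gt0 T_gt0 H_AB indeg_B /(expn_lt_of_Rpower_lt T_gt0 r_gt0) many_arcs.
apply: (contains_of_large_outdeg_sum H_AB indeg_B r_gt0).
have := leq_power_mean_sum (outdeg G) r.-1; rewrite prednK // -narcs_outdeg => power_mean.
rewrite -(ltn_pmul2l (_ : 0 < #|T| ^ r.-1)) ?expn_gt0 ?T_gt0 // mulnCA.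
exact: leq_trans many_arcs power_mean.
Qed.

Lemma contains_of_many_arcs_outdeg (V T : finType) (H : rel V) (A : {set V}) (G : rel T) r :
  0 < r -> 0 < #|T| ->
  (forall u v, H u v -> (u \in A) /\ (v \notin A)) ->
  (forall u, u \in A -> outdeg H u <= r) ->
  (INR (2 * #|V| + (2 * #|V|) ^ r) * Rpower (INR #|T|) (2 - / INR r) < INR (narcs G))%R ->
  contains G H.
Proof.
move=> r_gt0 T_gt0 H_AB outdeg_A many_arcs; apply: contains_transpose.
apply: (@contains_of_many_arcs _ _ (fun u v => H v u) (~: A) (fun x y => G y x) r
  r_gt0 T_gt0); last by rewrite narcs_transpose.
  by move=> u v /H_AB [vA uB]; rewrite !inE vA uB.
by move=> u; rewrite inE negbK => /outdeg_A.
Qed.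

Lemma INR_ex_le (V : finType) (H : rel V) n (x : R) : (0 <= x)%R ->
  (forall g : {ffun 'I_n * 'I_n -> bool}, ~~ contains (fun x y => g (x, y)) H ->
     (INR (narcs (fun x y => g (x, y))) <= x)%R) ->
  (INR (ex H n) <= x)%R.
Proof.
move=> x_ge0 narcs_le; apply: (big_ind (fun m => INR m <= x)%R) => // [a b | g /andP [_]].
  by rewrite /maxn; case: ifP.
exact: narcs_le.
Qed.

Theorem corollary11 (V : finType) (H : rel V) (A : {set V}) :
  oriented H ->
  (forall u v, H u v -> (u \in A) /\ (v \notin A)) ->
  (exists u v, H u v) ->
  exists C : R, (0 < C)%R /\
    exists N : nat, forall n : nat, (N <= n)%N ->
      (INR (ex H n) <= C * Rpower (INR n) (2 - / INR (Delta' H A)))%R.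
Proof.
move=> _ H_AB [u0 [v0 Hu0v0]]; have [u0A v0B] := H_AB _ _ Hu0v0.
set a := \max_(v in A) udeg H v; set b := \max_(v in ~: A) udeg H v.
have outdeg_A u : u \in A -> outdeg H u <= a.
  by move=> uA; apply: leq_trans (leq_outdeg_udeg H u) (leq_bigmax_cond _ uA).
have indeg_B v : v \notin A -> indeg H v <= b.
  by rewrite -in_setC => vB; apply: leq_trans (leq_indeg_udeg H v) (leq_bigmax_cond _ vB).
have r_gt0 : 0 < Delta' H A.
  rewrite leq_min; apply/andP; split.
    by apply: leq_trans (outdeg_A _ u0A); apply/card_gt0P; exists v0; rewrite inE.
  by apply: leq_trans (indeg_B _ v0B); apply/card_gt0P; exists u0; rewrite inE.
have V_gt0 : 0 < #|V| by apply/card_gt0P; exists u0.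
pose K := 2 * #|V| + (2 * #|V|) ^ Delta' H A.
exists (INR K); split; first by apply/lt_0_INR/ltP; rewrite /K; lia.
exists 1 => n n_gt0; apply: INR_ex_le => [|g not_contains].
  by apply/Rmult_le_pos/Rlt_le/exp_pos/pos_INR.
apply: Rnot_lt_le => many_arcs; case/negP: not_contains.
have [ba | ab] := leqP b a.
- rewrite /K /Delta' -/a -/b (minn_idPr ba) in r_gt0 many_arcs.
  by apply: (contains_of_many_arcs r_gt0 _ H_AB indeg_B); rewrite card_ord.
- rewrite /K /Delta' -/a -/b (minn_idPl (ltnW ab)) in r_gt0 many_arcs.
  by apply: (contains_of_many_arcs_outdeg r_gt0 _ H_AB outdeg_A); rewrite card_ord.
Qed.
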